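(* Let $G=(V,E)$ be a finite, connected, undirected graph with $n\ge2$ vertices and let $r>1$. Then the absorption time $\tau$ of the Moran process on $G$ with fitness $r$ (started from a single mutant at any vertex) satisfies $$\mathbb{E}[\tau]\le\frac{r}{r-1}n^3\phi(G)\le\frac{r}{r-1}n^4.$$
   Context: The Moran process on $G$ with mutant fitness $r>0$ is the Markov chain $(X_i)_{i\ge0}$ whose state $X_i\subseteq V$ is the set of vertices occupied by mutants; every other vertex is occupied by a non-mutant of fitness $1$. Write $W(S)=r|S|+|V\setminus S|$ for the total fitness. Given $X_i=S$, one step is: choose a vertex $x$ with probability $r/W(S)$ if $x\in S$ and $1/W(S)$ if $x\notin S$; then choose a neighbour $y$ of $x$ uniformly at random; set $X_{i+1}=S\cup\{y\}$ if $x\in S$ and $X_{i+1}=S\setminus\{y\}$ if $x\notin S$. The process starts from $X_0=\{x\}$ for a single vertex $x$. The absorption time is $\tau=\min\{i: X_i=\emptyset\text{ or }X_i=V\}$. For $X\subseteq V$, $\phi(X)=\sum_{x\in X}\frac{1}{\deg x}$, and $\phi(G)=\phi(V)$. *)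

From HB Require Import structures.
From mathcomp Require Import all_boot all_order all_algebra.
Set Implicit Arguments. Unset Strict Implicit. Unset Printing Implicit Defensive.
Import Order.TTheory GRing.Theory Num.Theory.
Local Open Scope ring_scope.

Section Moran.
Variables (R : realFieldType) (T : finType) (e : rel T).

Definition deg (x : T) : nat := #|[set y | e x y]|.

Definition phi (X : {set T}) : R := \sum_(x in X) ((deg x)%:R)^-1.

Variable r : R.

Definition fitness (S : {set T}) : R := r * (#|S|%:R) + (#|~: S|%:R).

Definition trans (S S' : {set T}) : R :=
  \sum_(x : T) \sum_(y : T | e x y)
     ((if x \in S then r else 1) / fitness S) * ((deg x)%:R)^-1 *
     (S' == (if x \in S then y |: S else S :\ y))%:R.

(* dist x0 k S = P(X_k = S) for the chain started at X_0 = {x0} *)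
Fixpoint dist (x0 : T) (k : nat) (S : {set T}) : R :=
  match k with
  | 0 => (S == [set x0])%:R
  | k'.+1 => \sum_(S0 : {set T}) dist x0 k' S0 * trans S0 S
  end.

(* P(tau > k) = P(X_k is neither empty nor V); both are absorbing states *)
Definition tail_prob (x0 : T) (k : nat) : R :=
  \sum_(S : {set T} | (S != set0) && (S != setT)) dist x0 k S.

(* partial sums of E[tau] = sum_{k >= 0} P(tau > k) *)
Definition exp_tau_partial (x0 : T) (K : nat) : R :=
  \sum_(k < K) tail_prob x0 k.

End Moran.

Definition simple_connected_graph (T : finType) (e : rel T) : Prop :=
  symmetric e /\ irreflexive e /\ (forall x y : T, connect e x y).

From HB Require Import structures.
From mathcomp Require Import all_boot all_order all_algebra.
From mathcomp Require Import ring.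
Import Order.TTheory GRing.Theory Num.Theory.
Local Open Scope ring_scope.
Set Implicit Arguments. Unset Strict Implicit.

(* Use phi(X) = sum_{x in X} 1/deg x
   as a potential on the states of the Moran process.  A move along the edge
   (x, y) changes the potential by +-1/deg y, and pairing each boundary edge
   (x in S, y notin S) with its reverse shows that the expected one-step change
   of phi from state S equals
     drift S = sum over boundary edges (x, y) of (r - 1) / (W(S) deg x deg y),
   which is nonnegative, and at least delta = (r - 1) / (r n^3) on every
   transient state, since a connected graph has a boundary edge, W(S) <= r n
   and deg <= n.  Summing over the first K steps gives
     delta * sum_{k < K} P(tau > k) <= E[phi(X_K)] <= phi(G),
   i.e. the bound on E[tau]; finally phi(G) <= n because every degree is >= 1.
   The file proves the graph facts, the bounds on the fitness, the basic facts
   on the one-step transition kernel, the drift identity and its lower bound,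
   and then accumulates the drift over time. *)

Section GraphFacts.
Variables (T : finType) (e : rel T).
Hypothesis e_connected : forall x y : T, connect e x y.

(* In a connected graph with at least two vertices every vertex has a neighbour;
   this makes the uniform choice of a neighbour well defined. *)
Lemma deg_gt0 : (1 < #|T|)%N -> forall x, (0 < deg e x)%N.
Proof.
move=> n_gt1 x; have [y y_neq_x] : exists y, y != x.
  apply/existsP; rewrite -negb_forall; apply/negP => /forallP all_x.
  have : (#|T| <= 1)%N.
    rewrite -(card1 x); apply: subset_leq_card; apply/subsetP => z _.
    by rewrite inE; apply/eqP/eqP/all_x.
  by rewrite leqNgt n_gt1.
have /connectP [[|z p] /= path_p last_p] := e_connected x y.
  by rewrite last_p eqxx in y_neq_x.
case/andP: path_p => exz _; rewrite /deg card_gt0; apply/set0Pn.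
by exists z; rewrite inE.
Qed.

(* A nonempty proper set of vertices of a connected graph is left by an edge:
   this is what makes the drift of phi positive on transient states. *)
Lemma boundary_edge (S : {set T}) : S != set0 -> S != setT ->
  exists u v, [/\ u \in S, v \notin S & e u v].
Proof.
move=> /set0Pn [u uS]; rewrite -properT => /properP [_ [v _ vNS]].
have /connectP [p path_p last_p] := e_connected u v.
elim: p u uS path_p last_p => [|z p IH] u uS /=.
  by move=> _ last_p; rewrite last_p uS in vNS.
case/andP=> euz path_p last_p; case: (boolP (z \in S)) => [zS | zNS].
  exact: IH zS path_p last_p.
by exists u, z.
Qed.

End GraphFacts.

Lemma phi_setT_le (R : realFieldType) (T : finType) (e : rel T) :
  (forall x y : T, connect e x y) -> (1 < #|T|)%N -> phi R e setT <= #|T|%:R.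
Proof.
move=> e_connected n_gt1.
have <- : \sum_(x in [set: T]) (1 : R) = #|T|%:R by rewrite sumr_const cardsT.
apply: ler_sum => x _.
have dx := deg_gt0 e_connected n_gt1 x.
by rewrite invr_le1 ?ler1n ?ltr0n // unitfE pnatr_eq0 -lt0n.
Qed.

Section Fitness.
Variables (R : realFieldType) (T : finType) (r : R).

Lemma fitness_gt0 (S : {set T}) : 0 < r -> (0 < #|T|)%N -> 0 < fitness r S.
Proof.
move=> r_gt0 n_gt0; rewrite /fitness; have := cardsC S.
case: (posnP #|S|) => [-> | S_gt0] card_S.
  by rewrite mulr0 add0r ltr0n; move: card_S; rewrite add0n => ->.
by rewrite ltr_wpDr // mulr_gt0 // ltr0n.
Qed.

Lemma fitness_le (S : {set T}) : 1 <= r -> fitness r S <= r * #|T|%:R.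
Proof.
move=> r_ge1; rewrite /fitness -(cardsC S) natrD mulrDr lerD2l.
by rewrite -{1}(mul1r (#|~: S|%:R)) ler_wpM2r.
Qed.

End Fitness.

Section Chain.
Variables (R : realFieldType) (T : finType) (e : rel T) (r : R).
Hypothesis r_gt0 : 0 < r.
Hypothesis n_gt0 : (0 < #|T|)%N.
Hypothesis deg_pos : forall x, (0 < deg e x)%N.

Local Notation W := (fitness r).

(* Probability of the step in which x reproduces onto a given neighbour. *)
Definition rate (S : {set T}) (x : T) : R :=
  ((if x \in S then r else 1) / W S) * ((deg e x)%:R)^-1.

Definition move (S : {set T}) (x y : T) : {set T} :=
  if x \in S then y |: S else S :\ y.

Lemma rate_ge0 S x : 0 <= rate S x.
Proof.
rewrite /rate mulr_ge0 ?invr_ge0 ?ler0n // divr_ge0 ?ltW ?fitness_gt0 //.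
by case: ifP; rewrite ?ler01 ?ltW.
Qed.

Lemma step_expect S (g : {set T} -> R) :
  \sum_S' trans e r S S' * g S' =
  \sum_x \sum_(y | e x y) rate S x * g (move S x y).
Proof.
rewrite /trans.
under eq_bigr => S' _ do rewrite mulr_suml; rewrite exchange_big /=.
apply: eq_bigr => x _.
under eq_bigr => S' _ do rewrite mulr_suml; rewrite exchange_big /=.
apply: eq_bigr => y _; rewrite (bigD1 (move S x y)) //= big1 ?addr0.
  by rewrite /move eqxx mulr1.
by move=> S' /negbTE neq; rewrite /move neq mulr0 mul0r.
Qed.

Lemma rate_sum S x :
  \sum_(y | e x y) rate S x = (if x \in S then r else 1) / W S.
Proof.
rewrite sumr_const.
have -> : #|e x| = deg e x by apply: eq_card => y; rewrite inE.
by rewrite /rate -[LHS]mulr_natr divfK // pnatr_eq0 -lt0n.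
Qed.

Lemma trans_sum1 S : \sum_S' trans e r S S' = 1.
Proof.
have := step_expect S (fun _ => 1); under eq_bigr do rewrite mulr1; move=> ->.
under eq_bigr do under eq_bigr do rewrite mulr1.
under eq_bigr do rewrite rate_sum.
rewrite -mulr_suml (bigID (mem S)) /=.
rewrite (eq_bigr (fun _ => r)); last by move=> x ->.
rewrite [X in _ + X](eq_bigr (fun _ => 1)); last by move=> x /negbTE ->.
rewrite !sumr_const.
have -> : #|[pred x | x \notin S]| = #|~: S| by apply: eq_card => x; rewrite !inE.
by rewrite -[r *+ _]mulr_natr -[1 *+ _]mulr_natr mul1r mulfV // gt_eqF ?fitness_gt0.
Qed.

Lemma trans_ge0 S S' : 0 <= trans e r S S'.
Proof.
apply: sumr_ge0 => x _; apply: sumr_ge0 => y _.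
by rewrite mulr_ge0 ?ler0n // -/(rate S x) rate_ge0.
Qed.

Lemma dist_ge0 x0 k S : 0 <= dist e r x0 k S.
Proof.
elim: k S => [|k IH] S /=; first by rewrite ler0n.
by apply: sumr_ge0 => S0 _; rewrite mulr_ge0 ?IH ?trans_ge0.
Qed.

Lemma dist_step x0 k (g : {set T} -> R) :
  \sum_S dist e r x0 k.+1 S * g S =
  \sum_S0 dist e r x0 k S0 * \sum_S trans e r S0 S * g S.
Proof.
rewrite /=; under eq_bigr do rewrite mulr_suml.
rewrite exchange_big /=; apply: eq_bigr => S0 _; rewrite mulr_sumr.
by apply: eq_bigr => S _; rewrite mulrA.
Qed.

Lemma dist_sum1 x0 k : \sum_S dist e r x0 k S = 1.
Proof.
elim: k => [|k IH].
  by rewrite /= (bigD1 [set x0]) //= eqxx big1 ?addr0 // => S /negbTE ->.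
have := dist_step x0 k (fun _ => 1); under eq_bigr do rewrite mulr1; move=> ->.
by under eq_bigr do rewrite (eq_bigr _ (fun S _ => mulr1 _)) trans_sum1 mulr1.
Qed.

Section Potential.
Hypothesis e_sym : symmetric e.

Local Notation ph := (phi R e).
Local Notation dinv x := (((deg e x)%:R : R)^-1).

Definition edge_weight (S : {set T}) (x y : T) : R := (W S)^-1 * dinv x * dinv y.

Definition drift (S : {set T}) : R :=
  \sum_x \sum_(y | e x y)
     (if (x \in S) && (y \notin S) then (r - 1) * edge_weight S x y else 0).

Lemma rate_phi_move S x y :
  rate S x * ph (move S x y) =
  rate S x * ph S
  + (if (x \in S) && (y \notin S) then r * edge_weight S x y else 0)
  - (if (x \notin S) && (y \in S) then edge_weight S x y else 0).
Proof.
rewrite /move /rate /edge_weight.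
case: (boolP (x \in S)) => xS /=; case: (boolP (y \in S)) => yS /=.
- by rewrite subr0 addr0 (setUidPr _) // sub1set.
- by rewrite /phi big_setU1 //= subr0; ring.
- have -> : ph S = dinv y + ph (S :\ y) by rewrite /phi (big_setD1 _ yS).
  ring.
- by rewrite subr0 addr0 (setDidPl _) // disjoint_sym disjoints1.
Qed.

Lemma sum_edges_rev (F : T -> T -> R) :
  \sum_x \sum_(y | e x y) F x y = \sum_x \sum_(y | e x y) F y x.
Proof.
rewrite (exchange_big_dep predT) //=.
by apply: eq_bigr => x _; apply: eq_bigl => y; rewrite e_sym.
Qed.

Lemma step_expect_phi S : \sum_S' trans e r S S' * ph S' = ph S + drift S.
Proof.
rewrite step_expect; under eq_bigr do under eq_bigr do rewrite rate_phi_move.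
have phS_avg : ph S = \sum_x \sum_(y | e x y) rate S x * ph S.
  by rewrite -(step_expect S (fun _ => ph S)) -mulr_suml trans_sum1 mul1r.
rewrite [in RHS]phS_avg.
under eq_bigr do rewrite sumrB big_split /=.
rewrite sumrB big_split /= -addrA; congr (_ + _).
rewrite [X in _ - X]sum_edges_rev -sumrB; apply: eq_bigr => x _.
rewrite -sumrB; apply: eq_bigr => y _.
rewrite /edge_weight.
by case: (x \in S); case: (y \in S); rewrite /= ?subr0 //; ring.
Qed.

Section DriftBound.
Hypothesis r_gt1 : 1 < r.
Hypothesis e_connected : forall x y : T, connect e x y.

Definition delta : R := (r - 1) * (r * #|T|%:R ^+ 3)^-1.

Lemma edge_weight_ge S x y : (r * #|T|%:R ^+ 3)^-1 <= edge_weight S x y.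
Proof.
have deg_gt0 w : 0 < (deg e w)%:R :> R by rewrite ltr0n.
have deg_le w : (deg e w)%:R <= #|T|%:R :> R by rewrite ler_nat; exact: max_card.
rewrite /edge_weight -!invfM lef_pV2 ?posrE ?mulr_gt0 ?exprn_gt0 ?ltr0n //.
  rewrite !exprS expr0 mulr1 !mulrA.
  apply: ler_pM => //; first by rewrite mulr_ge0 ?ltW ?fitness_gt0.
  apply: ler_pM => //; first by rewrite ltW ?fitness_gt0.
  exact: fitness_le (ltW r_gt1).
exact: fitness_gt0.
Qed.

Lemma drift_term_ge0 (S : {set T}) (x y : T) :
  0 <= (if (x \in S) && (y \notin S) then (r - 1) * edge_weight S x y else 0).
Proof.
case: ifP => // _; apply: mulr_ge0; first by rewrite subr_ge0 ltW.
apply: le_trans (edge_weight_ge S x y).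
by rewrite invr_ge0 mulr_ge0 ?exprn_ge0 ?ler0n ?ltW.
Qed.

Lemma drift_ge0 S : 0 <= drift S.
Proof. by do 2!apply: sumr_ge0 => ? _; exact: drift_term_ge0. Qed.

Lemma drift_ge_delta S : S != set0 -> S != setT -> delta <= drift S.
Proof.
move=> S_neq0 S_neqT; have [u [v [uS vNS euv]]] := boundary_edge e_connected S_neq0 S_neqT.
rewrite /drift (bigD1 u) //= (bigD1 v) //= -addrA ler_wpDr //.
  by rewrite addr_ge0 //; do ?apply: sumr_ge0 => ? _; exact: drift_term_ge0.
by rewrite uS vNS /= /delta ler_wpM2l ?edge_weight_ge // subr_ge0 ltW.
Qed.

Definition expected_phi (x0 : T) (k : nat) : R :=
  \sum_S dist e r x0 k S * ph S.

Lemma expected_phi_ge x0 K : delta * exp_tau_partial e r x0 K <= expected_phi x0 K.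
Proof.
elim: K => [|K IH].
  rewrite /exp_tau_partial big_ord0 mulr0; apply: sumr_ge0 => S _.
  by rewrite mulr_ge0 ?dist_ge0 //; apply: sumr_ge0 => x _; rewrite invr_ge0 ler0n.
rewrite /exp_tau_partial big_ord_recr /= -/(exp_tau_partial e r x0 K) mulrDr.
rewrite /expected_phi dist_step.
under eq_bigr do rewrite step_expect_phi mulrDr.
rewrite big_split /= lerD // /tail_prob mulr_sumr.
rewrite [X in _ <= X](bigID (fun S : {set T} => (S != set0) && (S != setT))) /=.
rewrite ler_wpDr //; first by apply: sumr_ge0 => S _; rewrite mulr_ge0 ?dist_ge0 ?drift_ge0.
apply: ler_sum => S /andP [S_neq0 S_neqT].
by rewrite mulrC ler_wpM2l ?dist_ge0 ?drift_ge_delta.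
Qed.

Lemma expected_phi_le x0 K : expected_phi x0 K <= ph setT.
Proof.
have ph_le S : ph S <= ph setT.
  rewrite /phi [X in _ <= X](bigID (mem S)) /=.
  have -> : \sum_(x in setT | x \in S) dinv x = \sum_(x in S) dinv x.
    by apply: eq_bigl => x; rewrite inE.
  by rewrite ler_wpDr //; apply: sumr_ge0 => x _; rewrite invr_ge0 ler0n.
rewrite /expected_phi -[X in _ <= X]mul1r -(dist_sum1 x0 K) mulr_suml.
by apply: ler_sum => S _; rewrite ler_wpM2l ?dist_ge0.
Qed.

Lemma exp_tau_partial_le x0 K :
  exp_tau_partial e r x0 K <= r / (r - 1) * (#|T|%:R) ^+ 3 * ph setT.
Proof.
have delta_gt0 : 0 < delta.
  by rewrite mulr_gt0 ?subr_gt0 // invr_gt0 mulr_gt0 ?exprn_gt0 ?ltr0n ?ltW.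
rewrite -(ler_pM2l delta_gt0).
apply: le_trans (le_trans (expected_phi_ge x0 K) (expected_phi_le x0 K)) _.
rewrite [X in _ <= X](_ : _ = ph setT) // /delta.
by field; rewrite subr_eq0 !gt_eqF ?ltr0n.
Qed.

End DriftBound.
End Potential.
End Chain.

Unset Implicit Arguments.
Theorem theorem7 (R : realFieldType) (T : finType) (e : rel T) (r : R) :
  simple_connected_graph e -> (2 <= #|T|)%N -> 1 < r ->
  (forall (x0 : T) (K : nat),
     exp_tau_partial e r x0 K <= r / (r - 1) * (#|T|%:R) ^+ 3 * phi R e setT)
  /\ r / (r - 1) * (#|T|%:R) ^+ 3 * phi R e setT <= r / (r - 1) * (#|T|%:R) ^+ 4.
Proof.
move=> [e_sym [_ e_connected]] n_ge2 r_gt1.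
have r_gt0 : 0 < r := lt_trans ltr01 r_gt1.
have n_gt0 : (0 < #|T|)%N := ltnW n_ge2.
split=> [x0 K | ].
  exact: exp_tau_partial_le r_gt0 n_gt0 (deg_gt0 e_connected n_ge2) e_sym r_gt1 e_connected x0 K.
rewrite [in X in _ <= X]exprSr mulrA ler_wpM2l ?phi_setT_le //.
by rewrite mulr_ge0 ?exprn_ge0 ?ler0n ?divr_ge0 ?subr_ge0 ?ltW.
Qed.
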